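(* Any vector space over a division ring is locally trace equivalent to its underlying additive group. Hence the local trace equivalence class of an infinite vector space over a division ring is determined by the characteristic of the division ring.
   Context: A vector space over a division ring $\mathbb{E}$ is viewed as a structure in the language of abelian groups together with unary functions $v\mapsto\lambda v$ for each $\lambda\in\mathbb{E}$. ''Definable'' means with parameters. $\mathcal{N}$ locally trace defines $\mathcal{M}$ if there is a possibly infinite collection $\mathcal{E}$ of functions $M\to N$ such that every $\mathcal{M}$-definable subset of every $M^m$ is of the form $\{(a_1,\dots,a_m) : (f_1(a_{i_1}),\dots,f_n(a_{i_n}))\in Y\}$ for some $f_j\in\mathcal{E}$, $i_j\in\{1,\dots,m\}$ and $\mathcal{N}$-definable $Y\subseteq N^n$. A theory $T$ locally trace defines $T^*$ if some model of $T$ locally trace defines some model of $T^*$; two structures are locally trace equivalent if each of their theories locally trace defines the other. *)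

From HB Require Import structures.
From mathcomp Require Import all_boot all_algebra.

Set Implicit Arguments.
Unset Strict Implicit.
Unset Printing Implicit Defensive.

Import GRing.Theory.
Local Open Scope ring_scope.

Record signature := Sig {
  fsym : Type; farity : fsym -> nat;
  rsym : Type; rarity : rsym -> nat }.

Inductive term (L : signature) : Type :=
| Var : nat -> term L
| App : forall f : fsym L, ('I_(farity f) -> term L) -> term L.

Inductive formula (L : signature) : Type :=
| FEq : term L -> term L -> formula L
| FRel : forall r : rsym L, ('I_(rarity r) -> term L) -> formula L
| FFalse : formula L
| FImp : formula L -> formula L -> formula L
| FAnd : formula L -> formula L -> formula L
| FOr : formula L -> formula L -> formula L
| FEx : formula L -> formula L   (* binds de Bruijn variable 0 *)
| FAll : formula L -> formula L.

Record structure (L : signature) := Struct {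
  carrier :> Type;
  fint : forall f : fsym L, ('I_(farity f) -> carrier) -> carrier;
  rint : forall r : rsym L, ('I_(rarity r) -> carrier) -> Prop }.

Definition scons (T : Type) (x : T) (e : nat -> T) (n : nat) : T :=
  match n with 0 => x | S k => e k end.

Fixpoint eval (L : signature) (M : structure L) (e : nat -> M) (t : term L) : M :=
  match t with
  | Var i => e i
  | App f ts => @fint L M f (fun j => eval e (ts j))
  end.

Fixpoint sat (L : signature) (M : structure L) (e : nat -> M) (p : formula L) : Prop :=
  match p with
  | FEq t u => eval e t = eval e u
  | FRel r ts => @rint L M r (fun j => eval e (ts j))
  | FFalse => False
  | FImp p q => sat e p -> sat e q
  | FAnd p q => sat e p /\ sat e q
  | FOr p q => sat e p \/ sat e q
  | FEx p => exists x : M, sat (scons x e) p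
  | FAll p => forall x : M, sat (scons x e) p
  end.

Fixpoint term_bound (L : signature) (k : nat) (t : term L) : Prop :=
  match t with
  | Var i => (i < k)%N
  | App f ts => forall j, term_bound k (ts j)
  end.

Fixpoint formula_bound (L : signature) (k : nat) (p : formula L) : Prop :=
  match p with
  | FEq t u => term_bound k t /\ term_bound k u
  | FRel r ts => forall j, term_bound k (ts j)
  | FFalse => True
  | FImp p q | FAnd p q | FOr p q => formula_bound k p /\ formula_bound k q
  | FEx p | FAll p => formula_bound k.+1 p
  end.

Definition sentence (L : signature) (p : formula L) := formula_bound 0 p.

(** N is a model of the complete theory Th(M) (structures are nonempty) *)
Definition model_of_theory_of (L : signature) (M N : structure L) : Prop :=
  inhabited N /\
  forall p : formula L, sentence p ->
    ((forall e : nat -> M, sat e p) <-> (forall e : nat -> N, sat e p)).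

(** environment: variables 0..m-1 are the tuple a, variables m, m+1, ... the parameters b *)
Definition tuple_env (T : Type) (m : nat) (a : 'I_m -> T) (b : nat -> T) (i : nat) : T :=
  match (insub i : option 'I_m) with
  | Some j => a j
  | None => b (i - m)%N
  end.

Definition definable (L : signature) (M : structure L) (m : nat)
    (X : ('I_m -> M) -> Prop) : Prop :=
  exists (p : formula L) (b : nat -> M),
    forall a : 'I_m -> M, X a <-> sat (tuple_env a b) p.

Definition loc_trace_defines (L1 L2 : signature) (N : structure L1) (M : structure L2) : Prop :=
  exists E : ((M : Type) -> (N : Type)) -> Prop,
    forall (m : nat) (X : ('I_m -> M) -> Prop), definable X ->
      exists (n : nat) (f : 'I_n -> M -> N) (idx : 'I_n -> 'I_m) (Y : ('I_n -> N) -> Prop),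
        (forall j, E (f j)) /\ definable Y /\
        forall a : 'I_m -> M, X a <-> Y (fun j => f j (a (idx j))).

Definition theory_loc_trace_defines (L1 L2 : signature) (M : structure L1) (N : structure L2) : Prop :=
  exists (M' : structure L1) (N' : structure L2),
    model_of_theory_of M M' /\ model_of_theory_of N N' /\ loc_trace_defines M' N'.

Definition loc_trace_equiv (L1 L2 : signature) (M : structure L1) (N : structure L2) : Prop :=
  theory_loc_trace_defines M N /\ theory_loc_trace_defines N M.

Inductive ab_fsym := AZero | APlus | ANeg.
Definition ab_arity (f : ab_fsym) : nat :=
  match f with AZero => 0 | APlus => 2 | ANeg => 1 end.

Inductive vs_fsym (K : Type) := VZero | VPlus | VNeg | VScal of K.
Arguments VZero {K}. Arguments VPlus {K}. Arguments VNeg {K}.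
Definition vs_arity (K : Type) (f : vs_fsym K) : nat :=
  match f with VZero => 0 | VPlus => 2 | VNeg => 1 | VScal _ => 1 end.

Definition no_rarity (r : Empty_set) : nat := match r with end.

Definition ab_sig : signature := @Sig ab_fsym ab_arity Empty_set no_rarity.
Definition vs_sig (K : Type) : signature := @Sig (vs_fsym K) (@vs_arity K) Empty_set no_rarity.

Definition no_rint (T : Type) (r : Empty_set) (a : 'I_(no_rarity r) -> T) : Prop :=
  match r with end.

Definition ab_fint (V : zmodType) (f : ab_fsym) : ('I_(ab_arity f) -> V) -> V :=
  match f return ('I_(ab_arity f) -> V) -> V with
  | AZero => fun _ => 0
  | APlus => fun a => a ord0 + a ord_max
  | ANeg => fun a => - a ord0
  end.

Definition group_struct (V : zmodType) : structure ab_sig :=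
  @Struct ab_sig V (@ab_fint V) (@no_rint V).

Definition vs_fint (K : pzRingType) (V : lmodType K) (f : vs_fsym K) :
    ('I_(vs_arity f) -> V) -> V :=
  match f return ('I_(vs_arity f) -> V) -> V with
  | VZero => fun _ => 0
  | VPlus => fun a => a ord0 + a ord_max
  | VNeg => fun a => - a ord0
  | VScal k => fun a => k *: a ord0
  end.

Definition vs_struct (K : pzRingType) (V : lmodType K) : structure (vs_sig K) :=
  @Struct (vs_sig K) V (@vs_fint K V) (@no_rint V).

Definition division_ring (K : unitRingType) : Prop :=
  forall x : K, x != 0 -> x \is a GRing.unit.

Definition infinite_type (T : eqType) : Prop := ~ exists s : seq T, forall x : T, x \in s.

From HB Require Import structures.
From mathcomp Require Import all_boot all_algebra.
From mathcomp Require Import boolp classical_sets functions.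

Set Implicit Arguments.
Unset Strict Implicit.
Unset Printing Implicit Defensive.

Import GRing.Theory.
Local Open Scope ring_scope.
Local Open Scope classical_set_scope.

(* Over a division ring, infinite vector spaces eliminate quantifiers down to boolean
   combinations of linear equations [k_1 x_1 + ... + k_n x_n = b] (and finite ones define
   every set).  Such a set is the trace, under the maps [x |-> k_i x], of a set definable in
   the additive group, so the group locally trace defines the vector space; the converse is
   immediate.  If [K] and [K'] have the same characteristic, Zorn's lemma separates every
   nonzero vector of a [K']-space [V'] from [0] by an additive map [V' -> K], so [V'] embeds
   additively into the [K]-space [W] of [K]-valued functions on these maps.  [W] is an
   infinite [K]-space, hence a model of the theory of [V], and it locally trace defines
   [V'] through the embedding composed with the scalings of [V']. *)

Definition FTrue (L : signature) : formula L := FImp (FFalse L) (FFalse L).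

Definition FAnds (L : signature) (T : Type) (F : T -> formula L) (s : seq T) : formula L :=
  foldr (fun x p => FAnd (F x) p) (FTrue L) s.

Definition FOrs (L : signature) (T : Type) (F : T -> formula L) (s : seq T) : formula L :=
  foldr (fun x p => FOr (F x) p) (FFalse L) s.

Section Satisfaction.
Variables (L : signature) (M : structure L).

Lemma eval_bound k (e e' : nat -> M) (t : term L) :
  term_bound k t -> (forall i, (i < k)%N -> e i = e' i) -> eval e t = eval e' t.
Proof.
elim: t => [i|f ts IH] /= tb ee'; first exact: ee'.
by congr fint; apply: funext => j; apply: IH.
Qed.

Lemma sat_bound k (e e' : nat -> M) (p : formula L) :
  formula_bound k p -> (forall i, (i < k)%N -> e i = e' i) -> sat e p = sat e' p.
Proof.
elim: p k e e' => [t u|r ts||p IHp q IHq|p IHp q IHq|p IHp q IHq|p IHp|p IHp] k e e' /= pb ee';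
  have ee'S x : forall i, (i < k.+1)%N -> scons x e i = scons x e' i by case=> //= i /ee'.
4-6: by rewrite (IHp k e e' pb.1) // (IHq k e e' pb.2).
- by rewrite (eval_bound pb.1 ee') (eval_bound pb.2 ee').
- by congr rint; apply: funext => j; apply: eval_bound.
- by [].
- by apply: eq_exists => x; apply: IHp (ee'S x).
- by apply: eq_forall => x; apply: IHp (ee'S x).
Qed.

Lemma sat_sentence (p : formula L) (e e' : nat -> M) : sentence p -> sat e p = sat e' p.
Proof. by move=> sp; apply: (sat_bound sp). Qed.

Lemma sat_FAnds (T : eqType) (F : T -> formula L) (s : seq T) (e : nat -> M) :
  sat e (FAnds F s) <-> forall x, x \in s -> sat e (F x).
Proof.
elim: s => [|x s IHs] /=; first by split.
rewrite IHs; split => [[Fx Fs] y|Fs]; first by rewrite inE => /orP[/eqP->|/Fs].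
by split => [|y ys]; apply: Fs; rewrite inE ?eqxx ?ys ?orbT.
Qed.

Lemma sat_FOrs (T : eqType) (F : T -> formula L) (s : seq T) (e : nat -> M) :
  sat e (FOrs F s) <-> exists2 x, x \in s & sat e (F x).
Proof.
elim: s => [|x s IHs] /=; first by split => // -[].
rewrite IHs; split => [[Fx|[y ys Fy]]|[y]]; first by exists x; rewrite ?mem_head.
  by exists y; rewrite // inE ys orbT.
by rewrite inE => /orP[/eqP->|ys Fy]; [left|right; exists y].
Qed.

Lemma model_of_theory_of_refl : inhabited M -> model_of_theory_of M M.
Proof. by split. Qed.

End Satisfaction.

Lemma tuple_env_ord (T : Type) m (a : 'I_m -> T) (b : nat -> T) (j : 'I_m) :
  tuple_env a b j = a j.
Proof. by rewrite /tuple_env valK. Qed.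

Lemma tuple_env_ge (T : Type) m (a : 'I_m -> T) (b : nat -> T) i :
  (m <= i)%N -> tuple_env a b i = b (i - m)%N.
Proof. by move=> mi; rewrite /tuple_env insubF // ltnNge mi. Qed.

Section GroupFormulaInVectorSpace.
Variable K : pzRingType.

Definition vs_app_of_ab (f : ab_fsym) :
    ('I_(ab_arity f) -> term (vs_sig K)) -> term (vs_sig K) :=
  match f with
  | AZero => @App (vs_sig K) VZero
  | APlus => @App (vs_sig K) VPlus
  | ANeg => @App (vs_sig K) VNeg
  end.

Fixpoint vs_term_of_ab (t : term ab_sig) : term (vs_sig K) :=
  match t with
  | Var i => Var _ i
  | App f ts => vs_app_of_ab (fun j => vs_term_of_ab (ts j))
  end.

Fixpoint vs_formula_of_ab (p : formula ab_sig) : formula (vs_sig K) :=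
  match p with
  | FEq t u => FEq (vs_term_of_ab t) (vs_term_of_ab u)
  | FRel r _ => match r with end
  | FFalse => FFalse _
  | FImp p q => FImp (vs_formula_of_ab p) (vs_formula_of_ab q)
  | FAnd p q => FAnd (vs_formula_of_ab p) (vs_formula_of_ab q)
  | FOr p q => FOr (vs_formula_of_ab p) (vs_formula_of_ab q)
  | FEx p => FEx (vs_formula_of_ab p)
  | FAll p => FAll (vs_formula_of_ab p)
  end.

Variable V : lmodType K.

Lemma eval_vs_term_of_ab (e : nat -> V) (t : term ab_sig) :
  @eval _ (vs_struct V) e (vs_term_of_ab t) = @eval _ (group_struct V) e t.
Proof. by elim: t => [i|[] ts IH] //=; rewrite ?IH. Qed.

Lemma sat_vs_formula_of_ab (e : nat -> V) (p : formula ab_sig) :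
  @sat _ (vs_struct V) e (vs_formula_of_ab p) = @sat _ (group_struct V) e p.
Proof.
elim: p e => [t u|[]||p IHp q IHq|p IHp q IHq|p IHp q IHq|p IHp|p IHp] e //=;
  rewrite ?eval_vs_term_of_ab ?IHp ?IHq //.
- by apply: eq_exists => x; rewrite IHp.
- by apply: eq_forall => x; rewrite IHp.
Qed.

Lemma vs_definable_of_group m (Y : ('I_m -> V) -> Prop) :
  @definable _ (group_struct V) m Y -> @definable _ (vs_struct V) m Y.
Proof.
by case=> p [b Yp]; exists (vs_formula_of_ab p), b => a; rewrite sat_vs_formula_of_ab.
Qed.

End GroupFormulaInVectorSpace.

Lemma infinite_typeP (T : eqType) : infinite_type T -> forall s : seq T, exists x, x \notin s.
Proof.
move=> Tinf s; apply: contrapT => sT; apply: Tinf; exists s => x.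
by apply: contrapT => xs; apply: sT; exists x; apply/negP.
Qed.

Lemma infinite_type_inj (T U : eqType) (f : T -> U) :
  injective f -> infinite_type T -> infinite_type U.
Proof.
move=> f_inj Tinf [s sU]; apply: Tinf.
pose pre u := if pselect (exists t, f t = u) is left ex then Some (projT1 (cid ex)) else None.
exists (pmap pre s) => t; rewrite mem_pmap; apply/mapP; exists (f t) => //.
rewrite /pre; case: pselect => [ex|[]]; last by exists t.
by case: cid => t' /= /f_inj ->.
Qed.

Section VectorSpaceQE.
Variable K : unitRingType.

(* A literal [(l, true)] stands for [l = 0] and [(l, false)] for [l <> 0], where
   [(i, k)] in [l] contributes [k *: x_i]; a [dnf] is a disjunction of conjunctions. *)
Definition lform := seq (nat * K).
Definition lit := (lform * bool)%type.
Definition dnf := seq (seq lit).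

Definition lscale (c : K) (l : lform) : lform := [seq (p.1, c * p.2) | p <- l].

Definition lin_app (f : vs_fsym K) : ('I_(vs_arity f) -> lform) -> lform :=
  match f with
  | VZero => fun _ => [::]
  | VPlus => fun ls => ls ord0 ++ ls ord_max
  | VNeg => fun ls => lscale (-1) (ls ord0)
  | VScal k => fun ls => lscale k (ls ord0)
  end.

Fixpoint lin (t : term (vs_sig K)) : lform :=
  match t with
  | Var i => [:: (i, 1)]
  | App f ts => lin_app (fun j => lin (ts j))
  end.

Definition dand (D1 D2 : dnf) : dnf := [seq c1 ++ c2 | c1 <- D1, c2 <- D2].

Definition dneg (D : dnf) : dnf :=
  foldr (fun c D' => dand [seq [:: (x.1, ~~ x.2)] | x <- c] D') [:: [::]] D.

Definition lcoef0 (l : lform) : K := \sum_(p <- l | p.1 == 0%N) p.2.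
Definition lrest (l : lform) : lform := [seq (p.1.-1, p.2) | p <- l & p.1 != 0%N].
Definition lsubst (l0 l : lform) : lform :=
  lrest l ++ lscale (- (lcoef0 l * (lcoef0 l0)^-1)) (lrest l0).

(* Eliminates [exists x_0]: an equation involving [x_0] is solved for it, otherwise the
   literals involving [x_0] are disequations, which an infinite space satisfies. *)
Definition elim_conj (c : seq lit) : dnf :=
  if [seq x <- c | x.2 && (lcoef0 x.1 != 0)] is x0 :: _
  then [:: [seq (lsubst x0.1 x.1, x.2) | x <- c]]
  else [:: [seq (lrest x.1, x.2) | x <- c & lcoef0 x.1 == 0]].

Definition exq (D : dnf) : dnf := flatten (map elim_conj D).

Fixpoint qe (p : formula (vs_sig K)) : dnf :=
  match p with
  | FEq t u => [:: [:: (lin t ++ lscale (-1) (lin u), true)]]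
  | FRel r _ => match r with end
  | FFalse => [::]
  | FImp p q => dneg (qe p) ++ qe q
  | FAnd p q => dand (qe p) (qe q)
  | FOr p q => qe p ++ qe q
  | FEx p => exq (qe p)
  | FAll p => dneg (exq (dneg (qe p)))
  end.

Section Semantics.
Variable V : lmodType K.

Definition den (e : nat -> V) (l : lform) : V := \sum_(p <- l) p.2 *: e p.1.
Definition lsat (e : nat -> V) (x : lit) : bool := (den e x.1 == 0) == x.2.
Definition csat (e : nat -> V) (c : seq lit) : bool := all (lsat e) c.
Definition dsat (e : nat -> V) (D : dnf) : bool := has (csat e) D.

Lemma den_cat e l1 l2 : den e (l1 ++ l2) = den e l1 + den e l2.
Proof. exact: big_cat. Qed.

Lemma den_scale e c l : den e (lscale c l) = c *: den e l.
Proof. by rewrite /den big_map scaler_sumr; apply: eq_bigr => p _; rewrite scalerA. Qed.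

Lemma eval_lin e t : @eval _ (vs_struct V) e t = den e (lin t).
Proof.
elim: t => [i|[||| k] ts IH] /=; first by rewrite /den big_seq1 scale1r.
- by rewrite /den big_nil.
- by rewrite den_cat !IH.
- by rewrite den_scale IH scaleN1r.
- by rewrite den_scale IH.
Qed.

Lemma den_scons x e l : den (scons x e) l = lcoef0 l *: x + den e (lrest l).
Proof.
rewrite /den /lcoef0 /lrest big_map big_filter big_mkcond [in RHS]big_mkcond /=.
rewrite [X in _ + X]big_mkcond scaler_suml -big_split; apply: eq_bigr => -[[|i] k] _ /=.
  by rewrite addr0.
by rewrite scale0r add0r.
Qed.

Lemma den_subst e l0 l :
  den e (lsubst l0 l) = den (scons (- ((lcoef0 l0)^-1 *: den e (lrest l0))) e) l.
Proof.
by rewrite den_scons den_cat den_scale addrC scalerN scaleNr scalerA.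
Qed.

Lemma dsat_cat e D1 D2 : dsat e (D1 ++ D2) = dsat e D1 || dsat e D2.
Proof. exact: has_cat. Qed.

Lemma dsat_dand e D1 D2 : dsat e (dand D1 D2) = dsat e D1 && dsat e D2.
Proof.
elim: D1 => [|c D1 IH] //; rewrite /dand allpairs_cons dsat_cat -/(dand _ _) IH.
rewrite /dsat has_map andb_orl; congr (_ || _).
rewrite (@eq_has _ _ (fun c2 => csat e c && csat e c2)) => [|c2]; last exact: all_cat.
by case: (csat e c); last by clear IH; elim: D2.
Qed.

Lemma dsat_dneg e D : dsat e (dneg D) = ~~ dsat e D.
Proof.
elim: D => [|c D IH] //=; rewrite dsat_dand IH negb_or; congr (_ && _).
rewrite /dsat has_map /csat -has_predC; apply: eq_has => x /=.
by rewrite andbT /lsat; case: (_ == 0); case: x.2.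
Qed.

Hypothesis divK : division_ring K.

Lemma scale_add_eq0 (c : K) (x w : V) : c != 0 -> (c *: x + w == 0) = (x == - (c^-1 *: w)).
Proof.
move=> /divK cU; rewrite addr_eq0 -scalerN.
by apply/eqP/eqP => [<-|->]; rewrite scalerA ?mulVr ?mulrV ?scale1r.
Qed.

Lemma elim_conj_subst e (c : seq lit) (x0 : lit) : x0 \in c -> x0.2 -> lcoef0 x0.1 != 0 ->
  csat e [seq (lsubst x0.1 x.1, x.2) | x <- c] <-> exists x, csat (scons x e) c.
Proof.
move=> x0c x0eq x00; set u := - ((lcoef0 x0.1)^-1 *: den e (lrest x0.1)).
have substE : csat e [seq (lsubst x0.1 x.1, x.2) | x <- c] = csat (scons u e) c.
  by rewrite /csat all_map; apply: eq_all => x; rewrite /lsat /= den_subst.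
rewrite substE; split => [|[x /allP xc]]; first by exists u.
suff <- : x = u by apply/allP.
have := xc x0 x0c; rewrite /lsat x0eq eqb_id den_scons scale_add_eq0 //.
by move/eqP.
Qed.

Hypothesis infV : infinite_type V.

Lemma elim_conj_drop e (c : seq lit) : ~~ has (fun x => x.2 && (lcoef0 x.1 != 0)) c ->
  csat e [seq (lrest x.1, x.2) | x <- c & lcoef0 x.1 == 0] <-> exists x, csat (scons x e) c.
Proof.
move=> noeq; split => [|[x /allP xc]]; last first.
  apply/allP => _ /mapP[y + ->]; rewrite mem_filter => /andP[/eqP y0 yc].
  by have := xc y yc; rewrite /lsat den_scons y0 scale0r add0r.
move=> /allP restc.
pose roots := [seq - ((lcoef0 y.1)^-1 *: den e (lrest y.1)) | y <- c & lcoef0 y.1 != 0].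
have [x xroots] := infinite_typeP infV roots; exists x; apply/allP => y yc.
rewrite /lsat den_scons; have [y0|y0] := eqVneq (lcoef0 y.1) 0.
  rewrite y0 scale0r add0r; apply: (restc (lrest y.1, y.2)).
  by apply/mapP; exists y; rewrite // mem_filter y0 eqxx.
have -> : y.2 = false by apply: negbTE; apply: contra noeq => y2; apply/hasP; exists y; rewrite ?y2.
rewrite eqbF_neg scale_add_eq0 //; apply: contraNN xroots => /eqP ->.
by apply/mapP; exists y; rewrite // mem_filter y0.
Qed.

Lemma dsat_elim_conj e (c : seq lit) : dsat e (elim_conj c) <-> exists x, csat (scons x e) c.
Proof.
rewrite /elim_conj /dsat; case E: [seq x <- c | _] => [|x0 s] /=; rewrite orbF.
  by apply: elim_conj_drop; rewrite has_filter E.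
have : x0 \in [seq x <- c | x.2 && (lcoef0 x.1 != 0)] by rewrite E mem_head.
by rewrite mem_filter => /andP[/andP[x0eq x00] x0c]; apply: elim_conj_subst.
Qed.

Lemma dsat_exq e D : dsat e (exq D) <-> exists x, dsat (scons x e) D.
Proof.
elim: D => [|c D IH]; first by split => // -[].
rewrite /exq /= -/(exq D) dsat_cat; split.
  by case/orP => [/dsat_elim_conj|/IH] [x xcD]; exists x; rewrite /= xcD ?orbT.
by move=> [x /orP[xc|xD]]; apply/orP; [left; apply/dsat_elim_conj|right; apply/IH]; exists x.
Qed.

Lemma qe_ok p e : @sat _ (vs_struct V) e p <-> dsat e (qe p).
Proof.
elim: p e => [t u|[]||p IHp q IHq|p IHp q IHq|p IHp q IHq|p IHp|p IHp] e /=.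
- rewrite /dsat /csat /lsat /= den_cat den_scale scaleN1r -!eval_lin subr_eq0.
  by rewrite andbT orbF eqb_id; split => [->|/eqP].
- by [].
- rewrite dsat_cat dsat_dneg -implybE.
  by split => [pq|/implyP pq /IHp /pq /IHq //]; apply/implyP => /IHp /pq /IHq.
- by rewrite dsat_dand; split => [[/IHp-> /IHq->]|/andP[/IHp ? /IHq ?]].
- rewrite dsat_cat; split => [[/IHp->|/IHq->]|/orP[/IHp|/IHq]]; by [|rewrite orbT|left|right].
- by rewrite dsat_exq; split => -[x /IHp px]; exists x.
- rewrite dsat_dneg; split => [px|/negP nex x].
    apply/negP => /dsat_exq[x]; rewrite dsat_dneg => /negP; apply; exact/IHp.
  apply/IHp; apply/negPn/negP => npx; apply: nex; apply/dsat_exq; exists x.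
  by rewrite dsat_dneg.
Qed.

End Semantics.

Lemma dsat0 (V : lmodType K) (D : dnf) : dsat (fun=> 0 : V) D = has (all snd) D.
Proof.
apply: eq_has => c; apply: eq_all => x.
by rewrite /lsat /den big1 => [|p _]; rewrite ?scaler0 ?eqxx ?eqb_id.
Qed.

Lemma sentence_valid_qe (V : lmodType K) p : division_ring K -> infinite_type V -> sentence p ->
  (forall e : nat -> V, @sat _ (vs_struct V) e p) = has (all snd) (qe p).
Proof.
move=> divK infV sp; rewrite -(dsat0 V); apply/propeqP; split => [|D e].
  by move=> /(_ (fun=> 0)) /(qe_ok divK infV).
by rewrite (@sat_sentence _ (vs_struct V) _ e (fun=> 0) sp); apply/(qe_ok divK infV).
Qed.

Lemma model_of_theory_of_vs (V1 V2 : lmodType K) : division_ring K ->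
  infinite_type V1 -> infinite_type V2 -> model_of_theory_of (vs_struct V1) (vs_struct V2).
Proof.
move=> divK inf1 inf2; split=> [|p sp]; first by constructor; exact: 0.
by rewrite !sentence_valid_qe.
Qed.

End VectorSpaceQE.

Definition gzero : term ab_sig := @App ab_sig AZero (fun _ => Var ab_sig 0).
Definition gplus (t u : term ab_sig) : term ab_sig :=
  @App ab_sig APlus (fun j => if val j == 0%N then t else u).

Definition pairs_of (K : unitRingType) (D : dnf K) : seq (nat * K) :=
  flatten [seq flatten [seq x.1 | x <- c] | c <- D].

Lemma pairs_ofP (K : unitRingType) (D : dnf K) c (x : lit K) p :
  c \in D -> x \in c -> p \in x.1 -> p \in pairs_of D.
Proof.
move=> cD xc px; apply/flattenP; exists (flatten [seq x.1 | x <- c]); first exact: map_f.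
by apply/flattenP; exists x.1 => //; exact: map_f.
Qed.

Section GroupFormulaOfDnf.
Variables (K : unitRingType) (V : lmodType K) (G : zmodType) (g : V -> G).
Hypotheses (gD : {morph g : u v / u + v}) (g_inj : injective g).

(* [pos (i, k)] is the group variable standing for [g (k *: x_i)]. *)
Variable pos : nat * K -> nat.

Definition gsum (l : lform K) : term ab_sig :=
  foldr (fun p t => gplus (Var ab_sig (pos p)) t) gzero l.
Definition glit (x : lit K) : formula ab_sig :=
  if x.2 then FEq (gsum x.1) gzero else FImp (FEq (gsum x.1) gzero) (FFalse _).
Definition gdnf (D : dnf K) : formula ab_sig := FOrs (FAnds glit) D.

Variables (D : dnf K) (e : nat -> V) (ge : nat -> G).
Hypothesis posP : forall p, p \in pairs_of D -> ge (pos p) = g (p.2 *: e p.1).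

Let g0 : g 0 = 0.
Proof. by apply: (addrI (g 0)); rewrite -gD !addr0. Qed.

Lemma eval_gsum (l : lform K) : {subset l <= pairs_of D} ->
  @eval _ (group_struct G) ge (gsum l) = g (den e l).
Proof.
elim: l => [|p l IHl] lD /=; first by rewrite /den big_nil g0.
rewrite /den big_cons gD -/(den e l) -IHl => [|q ql]; last by apply: lD; rewrite inE ql orbT.
by rewrite -posP // lD ?mem_head.
Qed.

Lemma sat_glit (x : lit K) : {subset x.1 <= pairs_of D} ->
  @sat _ (group_struct G) ge (glit x) <-> lsat e x.
Proof.
move=> xD; have gsum0 : (@eval _ (group_struct G) ge (gsum x.1) = 0) <-> den e x.1 = 0.
  by rewrite eval_gsum //; split => [gx|->]; [apply: g_inj; rewrite gx g0|exact: g0].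
rewrite /glit /lsat; case: x.2 => /=; rewrite ?eqb_id ?eqbF_neg.
  by rewrite gsum0; split => [->|/eqP].
by split => [ne|/eqP ne /gsum0]; [apply/eqP => /gsum0|].
Qed.

Lemma sat_gdnf : @sat _ (group_struct G) ge (gdnf D) <-> dsat e D.
Proof.
have xD (c : seq (lit K)) (x : lit K) : c \in D -> x \in c -> {subset x.1 <= pairs_of D}.
  by move=> cD xc p; exact: (pairs_ofP cD xc).
rewrite sat_FOrs; split => [[c cD /sat_FAnds cs]|/hasP[c cD /allP cs]].
  by apply/hasP; exists c => //; apply/allP => x xc; apply/(sat_glit (xD c x cD xc))/cs.
by exists c => //; apply/sat_FAnds => x xc; apply/(sat_glit (xD c x cD xc))/cs.
Qed.

End GroupFormulaOfDnf.

Lemma dnf_trace (K : unitRingType) (V : lmodType K) (G : zmodType) (g : V -> G) :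
  {morph g : u v / u + v} -> injective g -> forall m (b : nat -> V) (D : dnf K),
  exists n (f : 'I_n -> V -> G) (idx : 'I_n -> 'I_m) (Y : ('I_n -> G) -> Prop),
    @definable _ (group_struct G) n Y /\
    forall a, dsat (tuple_env a b) D <-> Y (fun j => f j (a (idx j))).
Proof.
move=> gD g_inj m b D; set A := pairs_of D.
(* pairs on the tuple variables become traced coordinates, the others parameters of [Y] *)
set P := [seq p <- A | (p.1 < m)%N]; set Q := [seq p <- A | (m <= p.1)%N].
pose p0 : nat * K := (0%N, 0).
have P_lt (j : 'I_(size P)) : ((nth p0 P j).1 < m)%N.
  by have := mem_nth p0 (ltn_ord j); rewrite mem_filter => /andP[].
pose pos p := if (p.1 < m)%N then index p P else (size P + index p Q)%N.
pose b' k := g ((nth p0 Q k).2 *: b ((nth p0 Q k).1 - m)%N).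
exists (size P), (fun j v => g ((nth p0 P j).2 *: v)), (fun j => Ordinal (P_lt j)).
exists (fun y => @sat _ (group_struct G) (tuple_env y b') (gdnf pos D)).
split; first by exists (gdnf pos D), b'.
move=> a; symmetry; apply: sat_gdnf => // p pA; rewrite /pos.
case: ltnP => pm.
  have pP : (index p P < size P)%N by rewrite index_mem mem_filter pm pA.
  rewrite (tuple_env_ord _ _ (Ordinal pP)) (tuple_env_ord _ _ (Ordinal pm)) /=.
  have nthP : nth p0 P (index p P) = p by rewrite nth_index // -index_mem.
  by congr (g (_ *: a _)); [|apply: val_inj]; rewrite /= nthP.
have pQ : p \in Q by rewrite mem_filter pm pA.
by rewrite tuple_env_ge ?leq_addr // addKn (tuple_env_ge _ _ pm) /b' nth_index.
Qed.

Lemma finite_definable (L : signature) (M : structure L) (en : nat -> M) (k : nat) :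
  (forall y : M, exists2 i, (i < k)%N & en i = y) ->
  forall m (X : ('I_m -> M) -> Prop), definable X.
Proof.
move=> en_onto m X.
pose is_tuple (w : {ffun 'I_m -> 'I_k}) :=
  FAnds (fun i : 'I_m => FEq (Var L i) (Var L (m + w i))) (enum 'I_m).
pose W := [seq w : {ffun 'I_m -> 'I_k} <- enum {ffun 'I_m -> 'I_k}
            | `[< X (fun i => en (w i)) >]].
exists (FOrs is_tuple W), en => a.
have is_tupleP w : sat (tuple_env a en) (is_tuple w) <-> a = (fun i => en (w i)).
  have env_param (a' : 'I_m -> M) j : tuple_env a' en (m + j)%N = en j.
    by rewrite tuple_env_ge ?leq_addr ?addKn.
  rewrite sat_FAnds; split => [aw|-> i _]; last by rewrite /= tuple_env_ord env_param.
  by apply: funext => i; have /= := aw i; rewrite mem_enum tuple_env_ord env_param; apply.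
rewrite sat_FOrs; split => [Xa|[w]]; last first.
  by rewrite mem_filter => /andP[/asboolP Xw _] /is_tupleP ->.
have wi i : exists j : 'I_k, en j = a i by have [j jk <-] := en_onto (a i); exists (Ordinal jk).
pose w := [ffun i => projT1 (cid (wi i))].
have aw : a = (fun i => en (w i)) by apply: funext => i; rewrite ffunE; case: cid.
by exists w; [rewrite mem_filter mem_enum andbT; apply/asboolP; rewrite -aw|apply/is_tupleP].
Qed.

Lemma finite_loc_trace_defines (L1 L2 : signature) (N : structure L1) (M : structure L2)
    (h : M -> N) (en : nat -> N) (k : nat) :
  (forall y : N, exists2 i, (i < k)%N & en i = y) -> injective h -> loc_trace_defines N M.
Proof.
move=> en_onto h_inj; exists setT => m X _.
exists m, (fun _ => h), id, (fun y => exists2 a, X a & y = h \o a).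
split => //; split => [|a]; first exact: finite_definable en_onto _ _.
split => [Xa|[a' Xa' ha]]; first by exists a.
suff -> : a = a' by [].
by apply: funext => i; apply: h_inj; exact: (congr1 (fun y => y i) ha).
Qed.

Lemma loc_trace_defines_refl (L : signature) (M : structure L) : loc_trace_defines M M.
Proof. by exists setT => m X Xdef; exists m, (fun _ x => x), id, X. Qed.

Lemma loc_trace_defines_vs_of_group (K : pzRingType) (W : lmodType K) (L : signature)
    (M : structure L) :
  loc_trace_defines (group_struct W) M -> loc_trace_defines (vs_struct W) M.
Proof.
case=> E ltd; exists E => m X /ltd[n [f [idx [Y [Ef [Ydef XY]]]]]].
by exists n, f, idx, Y; split => //; split => //; exact: vs_definable_of_group.
Qed.

Lemma loc_trace_defines_vs_of_inj (K : unitRingType) (V : lmodType K) (G : zmodType)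
    (g : V -> G) :
  division_ring K -> infinite_type V -> {morph g : u v / u + v} -> injective g ->
  loc_trace_defines (group_struct G) (vs_struct V).
Proof.
move=> divK infV gD g_inj; exists setT => m X [p [b Xp]].
have [n [f [idx [Y [Ydef XY]]]]] := dnf_trace gD g_inj m b (qe p).
by exists n, f, idx, Y; split => //; split => // a; rewrite Xp (qe_ok divK infV) XY.
Qed.

Lemma group_loc_trace_defines_vs (K : unitRingType) (V : lmodType K) :
  division_ring K -> loc_trace_defines (group_struct V) (vs_struct V).
Proof.
move=> divK; have [infV|finV] := pselect (infinite_type V).
  by apply: (loc_trace_defines_vs_of_inj (g := id)) => //; exact: inj_id.
have [s sV] : exists s : seq V, forall y, y \in s by apply: contrapT.
apply: (@finite_loc_trace_defines _ _ (group_struct V) (vs_struct V) id (nth 0 s) (size s)) => // y.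
by exists (index y s); rewrite ?index_mem ?nth_index.
Qed.

Lemma loc_trace_defines_theory (L1 L2 : signature) (M : structure L1) (N : structure L2) :
  inhabited M -> inhabited N -> loc_trace_defines M N -> theory_loc_trace_defines M N.
Proof. by move=> M0 N0 MN; exists M, N; do 2?split => //; exact: model_of_theory_of_refl. Qed.

Section DivisionRing.
Variable K : unitRingType.
Hypothesis divK : division_ring K.

Lemma divring_mulf_eq0 (x y : K) : (x * y == 0) = (x == 0) || (y == 0).
Proof.
have [-> | x0] := eqVneq x 0; first by rewrite mul0r eqxx.
by rewrite -[X in _ == X](mulr0 x) (inj_eq (mulrI (divK x0))).
Qed.

Lemma divring_expf_eq0 (x : K) n : (x ^+ n == 0) = (0 < n)%N && (x == 0).
Proof.
elim: n => [|n IHn]; first by rewrite oner_eq0.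
by rewrite exprS divring_mulf_eq0 IHn andKb.
Qed.

Lemma divring_scaler_eq0 (V : lmodType K) (a : K) (v : V) :
  (a *: v == 0) = (a == 0) || (v == 0).
Proof.
have [-> | a0] := eqVneq a 0; first by rewrite scale0r eqxx.
apply/eqP/eqP => [av0|->]; last exact: scaler0.
by rewrite -[v]scale1r -(mulVr (divK a0)) -scalerA av0 scaler0.
Qed.

Lemma divring_natr_neq0 n : (n%:R != 0 :> K) = [pchar K]^'.-nat n.
Proof.
have [-> | /prod_prime_decomp->] := posnP n; first by rewrite eqxx.
rewrite !big_seq; elim/big_rec: _ => [|[p e] s /=]; first by rewrite oner_eq0.
case/mem_prime_decomp=> p_pr _ _; rewrite pnatM pnatX eqn0Ngt orbC => <-.
by rewrite natrM natrX divring_mulf_eq0 divring_expf_eq0 negb_or negb_and pnatE ?inE p_pr.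
Qed.

End DivisionRing.

Lemma divring_natr_eq0_pchar (K K' : unitRingType) : division_ring K -> division_ring K' ->
  [pchar K] =i [pchar K'] -> forall n, (n%:R == 0 :> K) = (n%:R == 0 :> K').
Proof.
move=> divK divK' pcharE n; apply: negb_inj.
by rewrite !divring_natr_neq0 //; apply: eq_pnat; exact: eq_negn.
Qed.

Definition zmod_closed_set (M : zmodType) (S : set M) :=
  S 0 /\ forall a b, S a -> S b -> S (a - b).

Section ZmodClosedSet.
Variables (M : zmodType) (S : set M).
Hypothesis S_closed : zmod_closed_set S.

Lemma zmod_closed_setN a : S a -> S (- a).
Proof. by case: S_closed => S0 SB Sa; rewrite -sub0r; apply: SB. Qed.

Lemma zmod_closed_setD a b : S a -> S b -> S (a + b).
Proof. by case: S_closed => _ SB Sa Sb; rewrite -[b]opprK; apply/SB/zmod_closed_setN. Qed.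

Lemma zmod_closed_setMn a n : S a -> S (a *+ n).
Proof.
case: S_closed => S0 _ Sa; elim: n => [|n IHn]; rewrite ?mulr0n // mulrS.
exact: zmod_closed_setD.
Qed.

Lemma zmod_closed_setMz a z : S a -> S (a *~ z).
Proof. by case: z => n Sa; [exact: zmod_closed_setMn|exact/zmod_closed_setN/zmod_closed_setMn]. Qed.

End ZmodClosedSet.

Lemma pair_mulrz (U W : zmodType) (a : U * W) (z : int) : a *~ z = (a.1 *~ z, a.2 *~ z).
Proof.
have pair_mulrn n : a *+ n = (a.1 *+ n, a.2 *+ n).
  by elim: n => [|n IHn]; rewrite ?mulr0n // !mulrS IHn.
by case: z => n; rewrite ?NegzE ?mulrNz -!pmulrn pair_mulrn.
Qed.

Section AdditiveSeparation.
Variables (K : unitRingType) (G : zmodType).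
Hypothesis divK : division_ring K.
Hypothesis mulrn_eq0 : forall n (y : G), (y *+ n == 0) = (y == 0) || (n%:R == 0 :> K).

Lemma mulrz_eq0 (y : G) (z : int) : (y *~ z == 0) = (y == 0) || (z%:~R == 0 :> K).
Proof. by case: z => n; rewrite ?NegzE ?mulrNz ?oppr_eq0 -pmulrn mulrn_eq0. Qed.

(* Graphs of additive maps from subgroups of [G] to [K]. *)
Definition partial_additive (S : set (G * K)) :=
  zmod_closed_set S /\ forall k, S (0, k) -> k = 0.

Definition adjoin (S : set (G * K)) (w : G * K) : set (G * K) :=
  fun q => exists2 a, S a & exists z, q = a + w *~ z.

Lemma partial_additive_fun S u c c' : partial_additive S -> S (u, c) -> S (u, c') -> c = c'.
Proof.
case=> -[_ SB] S_fun Suc Suc'; apply/eqP; rewrite -subr_eq0; apply/eqP/S_fun.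
by have : S (u - u, c - c') := SB _ _ Suc Suc'; rewrite subrr.
Qed.

Lemma adjoin_sub S w : S `<=` adjoin S w.
Proof. by move=> a Sa; exists a => //; exists 0; rewrite mulr0z addr0. Qed.

Lemma adjoin_mem S w : S 0 -> adjoin S w w.
Proof. by move=> S0; exists 0 => //; exists 1; rewrite mulr1z add0r. Qed.

Lemma partial_additive_adjoin S y d : partial_additive S ->
  (forall z c, S (y *~ z, c) -> c = d *~ z) -> partial_additive (adjoin S (y, d)).
Proof.
case=> -[S0 SB] S_fun slope; split; first split.
- exact: adjoin_sub.
- move=> _ _ [a1 Sa1 [z1 ->]] [a2 Sa2 [z2 ->]]; exists (a1 - a2); first exact: SB.
  by exists (z1 - z2); rewrite mulrzBr opprD addrACA.
- move=> k [a Sa [z E]].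
  have aE : a = (y *~ - z, k - d *~ z).
    by rewrite mulrNz -sub0r -[a](addrK ((y, d) *~ z)) -E pair_mulrz.
  rewrite aE in Sa; have := slope _ _ Sa; rewrite mulrNz => /eqP.
  by rewrite subr_eq addNr => /eqP.
Qed.

Lemma partial_additive_multiple S y n c : partial_additive S -> (0 < n)%N -> S (y *+ n, c) ->
  (forall n' c', (0 < n')%N -> S (y *+ n', c') -> (n <= n')%N) ->
  forall z c', S (y *~ z, c') -> exists q : int, z = q * n /\ c' = c *~ q.
Proof.
move=> Spa n_gt0 Syn n_min z c' Syz; set q := (z %/ n)%Z; set r := (z %% n)%Z.
have Sq : S (y *~ (q * n), c *~ q).
  by have := zmod_closed_setMz Spa.1 q Syn; rewrite pair_mulrz pmulrn -mulrzA mulrC.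
have Sr : S (y *~ r, c' - c *~ q).
  have : S (y *~ z - y *~ (q * n), c' - c *~ q) := Spa.1.2 _ _ Syz Sq.
  by rewrite -mulrzBr {1}(divz_eq z n) -/q -/r addrAC subrr add0r.
have r_ge0 : 0 <= r by rewrite modz_ge0 // eqz_nat -lt0n.
have r_lt : (`|r| < n)%N by rewrite -ltz_nat gez0_abs // ltz_pmod // ltz_nat.
have r0 : `|r|%N = 0%N.
  apply/eqP; rewrite -leqn0 leqNgt; apply: contraTN r_lt => r_gt0; rewrite -leqNgt.
  by apply: (n_min _ (c' - c *~ q) r_gt0); rewrite pmulrn gez0_abs.
have zE : z = q * n by rewrite {1}(divz_eq z n) -/q -/r -[r]gez0_abs // r0 addr0.
by exists q; split => //; apply: partial_additive_fun Spa _ Sq; rewrite -zE.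
Qed.

Lemma partial_additive_slope S y : partial_additive S ->
  exists d, forall z c, S (y *~ z, c) -> c = d *~ z.
Proof.
move=> Spa; have [[n0 n0_gt0 [c0 Syn0]]|none] :=
  pselect (exists2 n, (0 < n)%N & exists c, S (y *+ n, c)); last first.
  exists 0 => z c; rewrite mul0rz; case: z => [[|n]|n] Syz.
  - exact: Spa.2 Syz.
  - by case: none; exists n.+1 => //; exists c.
  - case: none; exists n.+1 => //; exists (- c).
    have : S (- (y *~ Negz n), - c) := zmod_closed_setN Spa.1 Syz.
    by rewrite NegzE mulrNz opprK -pmulrn.
pose P n := (0 < n)%N && `[< exists c, S (y *+ n, c) >].
have [|n /andP[n_gt0 /asboolP[c Syn]] n_min] := ex_minnP (ex_intro P n0 _).
  by rewrite /P n0_gt0; apply/asboolP; exists c0.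
have [d dE] : exists d, d *+ n = c.
  have [nK0|nK] := eqVneq (n%:R : K) 0.
    have /eqP y0 : y *+ n == 0 by rewrite mulrn_eq0 nK0 eqxx orbT.
    by exists 0; rewrite mul0rn (Spa.2 c) // -y0.
  by exists (n%:R^-1 * c); rewrite -(mulr_natl (n%:R^-1 * c)) mulVKr //; exact: divK.
exists d => z c' Syz; have [|q [-> ->]] := partial_additive_multiple Spa n_gt0 Syn _ Syz.
  by move=> n' c'' n'_gt0 Syn'; apply: n_min; rewrite /P n'_gt0; apply/asboolP; exists c''.
by rewrite -dE pmulrn -mulrzA mulrC.
Qed.

Definition partial_additive_at_one (x : G) (S : set (G * K)) := partial_additive S /\ S (x, 1).

(* [set0] is admitted because [Zorn_bigcup] also bounds the empty chain. *)
Lemma bigcup_partial_additive_at_one (x : G) (F : set (set (G * K))) :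
  F `<=` (fun S => S = set0 \/ partial_additive_at_one x S) -> total_on F subset ->
  let U := \bigcup_(S in F) S in U = set0 \/ partial_additive_at_one x U.
Proof.
move=> FP Ftot U.
have Fpa X a : F X -> X a -> partial_additive_at_one x X.
  by move=> FX Xa; case: (FP X FX) => // X0; rewrite X0 in Xa.
have [[X FX Xx]|none] := pselect (exists2 X, F X & X (x, 1)); [right|left]; last first.
  by apply/seteqP; split => // a [X FX Xa]; apply: none; exists X => //; case: (Fpa X a FX Xa).
have [[[X0 _] _] _] := Fpa X _ FX Xx.
split; [split; [split|]|by exists X].
- by exists X.
- move=> a b [Xa FXa Xaa] [Xb FXb Xbb]; have [sub|sub] := Ftot _ _ FXa FXb.
    by exists Xb => //; apply: (Fpa Xb b FXb Xbb).1.1.2 => //; exact: sub.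
  by exists Xa => //; apply: (Fpa Xa a FXa Xaa).1.1.2 => //; exact: sub.
- by move=> k [Y FY Yk]; exact: (Fpa Y _ FY Yk).1.2.
Qed.

Lemma additive_separating (x : G) : x != 0 ->
  exists phi : G -> K, {morph phi : u v / u + v} /\ phi x = 1.
Proof.
move=> x0; have [A [PA Amax]] := Zorn_bigcup (@bigcup_partial_additive_at_one x).
have [A_pa Ax] : partial_additive_at_one x A.
  case: PA => // A0; exfalso; apply: (Amax (adjoin [set 0] (x, 1))); last first.
    right; split; last exact: adjoin_mem.
    apply: partial_additive_adjoin => [|z c [xz0 ->]].
      by split; [split => // a b -> ->; rewrite subrr|move=> k []].
    by apply/esym/eqP; move/eqP: xz0; rewrite mulrz_eq0 (negbTE x0).
  by rewrite A0; split => // /(_ (x, 1) (adjoin_mem _ (erefl 0))).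
have A_total y : exists c, A (y, c).
  have [d slope] := partial_additive_slope y A_pa.
  apply: contrapT => Ay; apply: (Amax (adjoin A (y, d))).
    split; first exact: adjoin_sub.
    by move=> /(_ (y, d) (adjoin_mem _ A_pa.1.1)) Ayd; apply: Ay; exists d.
  by right; split; [exact: partial_additive_adjoin|exact: adjoin_sub].
pose phi y := projT1 (cid (A_total y)).
have Aphi y : A (y, phi y) by rewrite /phi; case: cid.
exists phi; split; last exact: partial_additive_fun A_pa (Aphi x) Ax.
move=> u v; apply: (partial_additive_fun A_pa (Aphi (u + v))).
exact: (zmod_closed_setD A_pa.1 (Aphi u) (Aphi v) : A (u + v, phi u + phi v)).
Qed.

End AdditiveSeparation.

Lemma vs_theory_loc_trace_defines_vs (K K' : unitRingType) (V : lmodType K)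
    (V' : lmodType K') :
  division_ring K -> division_ring K' -> infinite_type V -> infinite_type V' ->
  [pchar K] =i [pchar K'] -> theory_loc_trace_defines (vs_struct V) (vs_struct V').
Proof.
move=> divK divK' infV infV' pcharE.
have mulrn_eq0 n (y : V') : (y *+ n == 0) = (y == 0) || (n%:R == 0 :> K).
  by rewrite -scaler_nat divring_scaler_eq0 // orbC (divring_natr_eq0_pchar divK divK').
pose W : lmodType K := {phi : V' -> K | {morph phi : u v / u + v}} -> K^o.
pose g (v : V') : W := fun phi => (sval phi v : K^o).
have gD : {morph g : u v / u + v}.
  by move=> u v; apply: funext => -[phi phiD]; rewrite /g /= phiD.
have g_inj : injective g.
  move=> u v guv; apply/eqP; rewrite -subr_eq0; apply/negP => /negP uv0.
  have [phi [phiD phi1]] := additive_separating divK mulrn_eq0 uv0.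
  have phiu : phi u = 1 + phi v by rewrite -phi1 -phiD subrK.
  have /eqP := congr1 (fun w : W => w (exist _ phi phiD)) guv.
  by rewrite /g /= phiu -subr_eq0 addrK oner_eq0.
exists (vs_struct W), (vs_struct V'); split.
  exact: model_of_theory_of_vs divK infV (infinite_type_inj g_inj infV').
split; first by apply: model_of_theory_of_refl; constructor; exact: 0.
exact/loc_trace_defines_vs_of_group/(loc_trace_defines_vs_of_inj divK' infV' gD g_inj).
Qed.

Theorem proposition4p1 :
  (forall (K : unitRingType) (V : lmodType K),
     division_ring K -> loc_trace_equiv (vs_struct V) (group_struct V)) /\
  (forall (K K' : unitRingType) (V : lmodType K) (V' : lmodType K'),
     division_ring K -> division_ring K' ->
     infinite_type V -> infinite_type V' ->
     [pchar K] =i [pchar K'] ->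
     loc_trace_equiv (vs_struct V) (vs_struct V')).
Proof.
split=> [K V divK | K K' V V' divK divK' infV infV' pcharE].
  have V0 : inhabited V by constructor; exact: 0.
  split; apply: loc_trace_defines_theory => //.
    exact/loc_trace_defines_vs_of_group/loc_trace_defines_refl.
  exact: group_loc_trace_defines_vs.
by split; apply: vs_theory_loc_trace_defines_vs => // p; rewrite pcharE.
Qed.
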